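(* Let $x,y\ge 1$. The maximum number of edges of a connected minimal $(x,y)$ task-dependency graph of order $n$ is $\max(x,y)$ if $n=x+y$ (in which case $\min(x,y)=1$), and $2n-x-y-2$ if $n>x+y$.
   Context: A task-dependency graph is a finite directed acyclic graph (no loops, no multiple edges). A vertex is initial if it has in-degree $0$ and terminal if it has out-degree $0$; an isolated vertex counts as both. An $(x,y)$ task-dependency graph has exactly $x$ initial and exactly $y$ terminal vertices. A minimal $(x,y)$ task-dependency graph is an $(x,y)$ task-dependency graph from which removing any single edge produces a graph that is not an $(x,y)$ task-dependency graph. A connected minimal $(x,y)$ task-dependency graph is a minimal $(x,y)$ task-dependency graph whose underlying undirected graph is connected. The order is the number of vertices. *)

From mathcomp Require Import all_boot.
Set Implicit Arguments. Unset Strict Implicit. Unset Printing Implicit Defensive.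

(* A finite directed graph of order n: vertex set 'I_n, edge set D of ordered
   pairs (u,v) meaning an edge u -> v.  Using a set excludes multiple edges;
   loops are excluded by acyclicity. *)
Definition digraph (n : nat) := {set 'I_n * 'I_n}.

Definition adj n (D : digraph n) : rel 'I_n := fun u v => (u, v) \in D.

Definition acyclic n (D : digraph n) : bool :=
  [forall u : 'I_n, forall v : 'I_n, adj D u v ==> ~~ connect (adj D) v u].

Definition initial n (D : digraph n) (v : 'I_n) : bool :=
  [forall u : 'I_n, ~~ adj D u v].
Definition terminal n (D : digraph n) (v : 'I_n) : bool :=
  [forall u : 'I_n, ~~ adj D v u].

Definition n_initial n (D : digraph n) : nat := #|[set v | initial D v]|.
Definition n_terminal n (D : digraph n) : nat := #|[set v | terminal D v]|.

Definition tdg n (x y : nat) (D : digraph n) : Prop :=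
  acyclic D /\ n_initial D = x /\ n_terminal D = y.

Definition minimal_tdg n (x y : nat) (D : digraph n) : Prop :=
  tdg x y D /\ forall e, e \in D -> ~ tdg x y (D :\ e).

Definition weakly_connected n (D : digraph n) : Prop :=
  forall u v : 'I_n, connect (fun a b => adj D a b || adj D b a) u v.

Definition conn_minimal_tdg n (x y : nat) (D : digraph n) : Prop :=
  minimal_tdg x y D /\ weakly_connected D.

Definition n_edges n (D : digraph n) : nat := #|D|.

Definition is_max_edges (n x y m : nat) : Prop :=
  (exists D : digraph n, conn_minimal_tdg x y D /\ n_edges D = m) /\
  (forall D : digraph n, conn_minimal_tdg x y D -> n_edges D <= m).

From mathcomp Require Import all_boot zify.
Set Implicit Arguments. Unset Strict Implicit. Unset Printing Implicit Defensive.

(* Deleting an edge of a minimal task-dependency graph must create a new initial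
   or terminal vertex, so every edge is the only edge leaving its tail or the only
   edge entering its head.
   If n = x + y and the graph is connected, no vertex is isolated, so every vertex
   is initial or terminal but not both.  No vertex then has both an in-edge and an
   out-edge, every edge has an endpoint of degree one, and the graph is a star: it
   has n - 1 edges and its centre is the only initial or the only terminal vertex.
   If n > x + y, count an edge by its tail when the tail has out-degree one and by
   its head otherwise (the head then has in-degree one).  This injects the edges
   into the disjoint union of the n - y non-terminal and the n - x non-initial
   vertices, and a vertex that is neither initial nor terminal forces two points
   of that union to be missed.  The bound is attained by a source pointing to all
   non-initial vertices but one sink, which every other non-terminal vertex
   points to. *)

Lemma card_ord_lt n k : k <= n -> #|[set v : 'I_n | v < k]| = k.
Proof.
move=> le_kn; have widen_inj : injective (widen_ord le_kn) by move=> i j [] /val_inj.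
rewrite -[RHS]card_ord -cardsT -(card_imset _ widen_inj).
apply: eq_card => v; rewrite inE; apply/idP/imsetP => [lt_vk | [i _ ->]].
  by exists (Ordinal lt_vk); last exact: val_inj.
exact: ltn_ord i.
Qed.

Lemma card_setCP n (P : pred 'I_n) : #|[set v | ~~ P v]| = n - #|[set v | P v]|.
Proof.
have := cardsC [set v | P v]; rewrite card_ord.
have -> : ~: [set v | P v] = [set v | ~~ P v] by apply/setP => v; rewrite !inE.
lia.
Qed.

Lemma card_ord_geq n k : k <= n -> #|[set v : 'I_n | k <= v]| = n - k.
Proof.
move=> le_kn; rewrite -{2}(card_ord_lt le_kn) -card_setCP.
by apply: eq_card => v; rewrite !inE -leqNgt.
Qed.

Lemma card_setID_sub (T : finType) (P Q : pred T) : {subset Q <= P} ->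
  #|[set u | P u && ~~ Q u]| + #|[set u | Q u]| = #|[set u | P u]|.
Proof.
move=> QP; rewrite -(cardsID [set u | Q u] [set u | P u]) addnC.
congr (_ + _); apply: eq_card => u; rewrite !inE.
  by have := QP u; rewrite !unfold_in; case: (Q u) => [-> | _]; rewrite ?andbF.
by rewrite andbC.
Qed.

Lemma connect_neighbour (T : finType) (e : rel T) a b :
  connect e a b -> a != b -> exists c, e a c.
Proof.
case/connectP => [[|c p]] /=; first by move=> _ ->; rewrite eqxx.
by case/andP => eac _ _ _; exists c.
Qed.

Lemma star_of_pendant_edges (T : finType) (r : rel T) :
  1 < #|T| -> symmetric r -> (forall a b, connect r a b) ->
  (forall a b, r a b -> (forall z, r a z -> z = b) \/ (forall z, r b z -> z = a)) ->
  exists c, forall w, w != c -> r c w /\ (forall z, r w z -> z = c).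
Proof.
move=> /card_gt1P [a0 [b0 [_ _ ab0]]] rsym rconn pendant.
have [b r_ab] := connect_neighbour (rconn a0 b0) ab0.
have [c [a [rca a_leaf]]] : exists c a, r c a /\ forall z, r a z -> z = c.
  case: (pendant _ _ r_ab) => leaf; first by exists b, a0; rewrite rsym.
  by exists a0, b.
have nb_leaf w : r c w -> forall z, r w z -> z = c.
  case/pendant => // c_leaf; suff -> : w = a by [].
  exact/esym/c_leaf.
have closed_star : closed r [pred z | (z == c) || r c z].
  suff fwd p q : r p q -> (p == c) || r c p -> (q == c) || r c q.
    by move=> p q rpq; apply/idP/idP; apply: fwd; rewrite // rsym.
  move=> rpq /orP [/eqP pc | rcp]; first by rewrite -pc rpq orbT.
  by rewrite (nb_leaf _ rcp _ rpq) eqxx.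
exists c => w wc; suff rcw : r c w by split; [| exact: nb_leaf].
by have := closed_connect closed_star (rconn c w); rewrite !inE eqxx (negbTE wc) /= => <-.
Qed.

Section DigraphBasics.
Variables (n : nat) (D : digraph n).

Lemma acyclic_noloop u : acyclic D -> (u, u) \notin D.
Proof.
move=> /forallP /(_ u) /forallP /(_ u) /implyP acyc; apply/negP => uu.
by move: (acyc uu); rewrite connect0.
Qed.

Lemma acyclic_no2cycle u v : acyclic D -> (u, v) \in D -> (v, u) \notin D.
Proof.
move=> /forallP /(_ u) /forallP /(_ v) /implyP acyc uv; apply/negP => vu.
by move: (acyc uv); rewrite (connect1 (e := adj D) vu).
Qed.

Lemma acyclicS (D' : digraph n) : D' \subset D -> acyclic D -> acyclic D'.
Proof.
move=> /subsetP sD'D /forallP acyc; apply/forallP => a; apply/forallP => b.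
apply/implyP => ab; have := forallP (acyc a) b; rewrite /adj (sD'D _ ab) /=.
by apply: contra; apply: connect_sub => u v uv; apply/connect1/sD'D.
Qed.

Lemma acyclic_increasing : (forall u v, (u, v) \in D -> u < v) -> acyclic D.
Proof.
move=> incr; have conn_le a b : connect (adj D) a b -> a <= b.
  case/connectP => p + ->; elim: p a => [|c p IHp] a //= /andP [ac /IHp].
  exact/leq_trans/ltnW/incr.
apply/forallP => a; apply/forallP => b; apply/implyP => ab.
by apply/negP => /conn_le; rewrite leqNgt incr.
Qed.

Lemma edge_not_terminal u v : (u, v) \in D -> ~~ terminal D u.
Proof. by move=> uv; apply/forallPn; exists v; rewrite negbK. Qed.

Lemma edge_not_initial u v : (u, v) \in D -> ~~ initial D v.
Proof. by move=> uv; apply/forallPn; exists u; rewrite negbK. Qed.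

Lemma initialS (D' : digraph n) w : D' \subset D -> initial D w -> initial D' w.
Proof.
move=> /subsetP sD'D /forallP Dw; apply/forallP => a.
by apply: contra (Dw a); apply: sD'D.
Qed.

Lemma terminalS (D' : digraph n) w : D' \subset D -> terminal D w -> terminal D' w.
Proof.
move=> /subsetP sD'D /forallP Dw; apply/forallP => a.
by apply: contra (Dw a); apply: sD'D.
Qed.

Lemma n_initial_ltS (D' : digraph n) w : D' \subset D -> initial D' w -> ~~ initial D w ->
  n_initial D < n_initial D'.
Proof.
move=> sD'D D'w Dw; apply/proper_card/properP; split; last by exists w; rewrite !inE.
by apply/subsetP => v; rewrite !inE; apply: initialS.
Qed.

Lemma n_terminal_ltS (D' : digraph n) w : D' \subset D -> terminal D' w -> ~~ terminal D w ->
  n_terminal D < n_terminal D'.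
Proof.
move=> sD'D D'w Dw; apply/proper_card/properP; split; last by exists w; rewrite !inE.
by apply/subsetP => v; rewrite !inE; apply: terminalS.
Qed.

Lemma initial_setD1 u v u' w : (u', v) \in D -> u' != u ->
  initial (D :\ (u, v)) w = initial D w.
Proof.
move=> u'v u'u; apply/idP/idP; last exact/initialS/subD1set.
move=> /forallP D'w; apply/forallP => a; have := D'w a; rewrite /adj !inE.
case: (eqVneq (a, w) (u, v)) => [[_ wv] | //].
by move: (D'w u'); rewrite /adj !inE xpair_eqE (negbTE u'u) wv u'v.
Qed.

Lemma terminal_setD1 u v v' w : (u, v') \in D -> v' != v ->
  terminal (D :\ (u, v)) w = terminal D w.
Proof.
move=> uv' v'v; apply/idP/idP; last exact/terminalS/subD1set.
move=> /forallP D'w; apply/forallP => a; have := D'w a; rewrite /adj !inE.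
case: (eqVneq (w, a) (u, v)) => [[wu _] | //].
by move: (D'w v'); rewrite /adj !inE xpair_eqE (negbTE v'v) andbF wu uv'.
Qed.

Lemma exists_middle : n_initial D + n_terminal D < n ->
  exists m, ~~ initial D m && ~~ terminal D m.
Proof.
rewrite /n_initial /n_terminal => small.
set IT := [set v | initial D v] :|: [set v | terminal D v].
have /card_gt0P [m] : 0 < #|~: IT| by have := cardsC IT; rewrite cardsU card_ord; lia.
by rewrite !inE negb_or; exists m.
Qed.

Lemma initial_or_terminal : n_initial D + n_terminal D = n ->
  (forall w, ~~ (initial D w && terminal D w)) -> forall w, initial D w || terminal D w.
Proof.
rewrite /n_initial /n_terminal => full disj w; apply/negPn/negP => w_mid.
have IT0 : [set v | initial D v] :&: [set v | terminal D v] = set0.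
  by apply/setP => v; rewrite !inE (negbTE (disj v)).
have /subset_leq_card : [set v | initial D v] :|: [set v | terminal D v] \subset [set~ w].
  by apply/subsetP => v; rewrite !inE; apply: contraTneq => ->.
rewrite cardsU IT0 cards0 cardsC1 card_ord; have := ltn_ord w; lia.
Qed.

Lemma weakly_connected_not_isolated w : weakly_connected D -> 1 < n ->
  ~~ (initial D w && terminal D w).
Proof.
move=> Dconn n_gt1.
have /card_gt0P [z] : 0 < #|[set~ w]| by rewrite cardsC1 card_ord; lia.
rewrite !inE eq_sym => zw; have [a /orP [wa | aw]] := connect_neighbour (Dconn w z) zw.
  by rewrite (negbTE (edge_not_terminal wa)) andbF.
by rewrite (negbTE (edge_not_initial aw)).
Qed.

End DigraphBasics.

Definition solitary_edges n (D : digraph n) : Prop :=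
  forall u v, (u, v) \in D ->
  (forall v', (u, v') \in D -> v' = v) \/ (forall u', (u', v) \in D -> u' = u).

Lemma minimal_tdg_solitary n x y (D : digraph n) : minimal_tdg x y D -> solitary_edges D.
Proof.
move=> [[Dac [Dx Dy]] Dmin] u v uv.
have [/existsP [v' /andP [uv' v'v]] | /existsPn out_u] :=
  boolP [exists v', ((u, v') \in D) && (v' != v)]; last first.
  by left => v' uv'; apply/eqP; move: (out_u v'); rewrite uv' negbK.
have [/existsP [u' /andP [u'v u'u]] | /existsPn in_v] :=
  boolP [exists u', ((u', v) \in D) && (u' != u)]; last first.
  by right => u' u'v; apply/eqP; move: (in_v u'); rewrite u'v negbK.
case: (Dmin _ uv); split; first exact: acyclicS (subD1set D (u, v)) Dac.
split; [rewrite -Dx | rewrite -Dy]; apply: eq_card => w; rewrite !inE.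
  exact: initial_setD1 u'v u'u.
exact: terminal_setD1 uv' v'v.
Qed.

Section SplitStar.
Variables (n : nat) (D : digraph n).
Hypotheses (Dac : acyclic D) (Dsol : solitary_edges D) (Dconn : weakly_connected D).
Hypotheses (n_gt1 : 1 < n) (Dsplit : forall w, initial D w || terminal D w).

Local Notation und := (fun a b => adj D a b || adj D b a).

Lemma split_no_path2 u w v : (u, w) \in D -> (w, v) \in D -> False.
Proof.
move=> uw wv; have := Dsplit w.
by rewrite (negbTE (edge_not_initial uw)) (negbTE (edge_not_terminal wv)).
Qed.

Lemma split_edge_pendant u v : (u, v) \in D ->
  (forall z, und u z -> z = v) \/ (forall z, und v z -> z = u).
Proof.
move=> uv; case: (Dsol uv) => sole; [left | right] => z /orP [zz | zz];
  by [exact: sole | case: (split_no_path2 zz uv) | case: (split_no_path2 uv zz)].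
Qed.

Lemma split_star : exists c, forall w, w != c -> und c w /\ (forall z, und w z -> z = c).
Proof.
apply: star_of_pendant_edges Dconn _ => [| a b | a b /orP [ab | ba]].
- by rewrite card_ord.
- by rewrite orbC.
- exact: split_edge_pendant.
- by case: (split_edge_pendant ba); [right | left].
Qed.

Lemma split_card_edges : #|D| = n - 1.
Proof.
have [c star_c] := split_star.
pose g w := if adj D c w then (c, w) else (w, c).
have gK : {in [set~ c], cancel g (fun e => if e.1 == c then e.2 else e.1)}.
  by move=> w; rewrite !inE => wc; rewrite /g; case: (adj D c w); rewrite /= ?eqxx ?(negbTE wc).
have -> : D = g @: [set~ c].
  apply/setP => -[u v]; apply/idP/imsetP => [uv | [w]]; last first.
    rewrite !inE /g => /star_c [cw _] ->; case: ifP => [// | /negbT ncw].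
    by case/orP: cw => //; rewrite (negbTE ncw).
  have [uc | uc] := eqVneq u c.
    exists v; last by rewrite /g /adj -uc uv.
    by rewrite !inE; apply: contraTneq uv => ->; rewrite -uc acyclic_noloop.
  have [_ u_leaf] := star_c _ uc.
  have vc : v = c by apply: u_leaf; rewrite /adj uv.
  rewrite vc in uv *; exists u; rewrite ?inE // /g ifN //.
  exact: acyclic_no2cycle Dac uv.
by rewrite (card_in_imset (can_in_inj gK)) cardsC1 card_ord subn1.
Qed.

Lemma split_star_side : n_initial D = 1 \/ n_terminal D = 1.
Proof.
have [c star_c] := split_star.
have only_c (P : pred 'I_n) : P c -> (forall w, w != c -> ~~ P w) -> #|[set v | P v]| = 1.
  move=> Pc notP; rewrite -(cards1 c); apply: eq_card => w; rewrite !inE.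
  by apply/idP/eqP => [|-> //]; apply: contraTeq; apply: notP.
case/orP: (Dsplit c) => cside; [left | right]; apply: only_c => // w /star_c [/orP [cw | wc] _].
- exact: edge_not_initial cw.
- by rewrite (negbTE (edge_not_initial wc)) in cside.
- by rewrite (negbTE (edge_not_terminal cw)) in cside.
- exact: edge_not_terminal wc.
Qed.

End SplitStar.

Lemma conn_minimal_tdg_star n x y (D : digraph n) : 1 <= x -> 1 <= y -> n = x + y ->
  conn_minimal_tdg x y D -> #|D| = n - 1 /\ (x = 1 \/ y = 1).
Proof.
move=> x_gt0 y_gt0 nxy [Dmin Dconn]; have Dsol := minimal_tdg_solitary Dmin.
have [[Dac [Dx Dy]] _] := Dmin.
have n_gt1 : 1 < n by lia.
have Dsplit : forall w, initial D w || terminal D w.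
  by apply: initial_or_terminal => [| w]; [rewrite Dx Dy | exact: weakly_connected_not_isolated].
split; first exact: split_card_edges.
by rewrite -Dx -Dy; apply: split_star_side.
Qed.

Definition branching n (D : digraph n) (u : 'I_n) : bool :=
  [exists v1, exists v2, [&& adj D u v1, adj D u v2 & v1 != v2]].

Definition fed_by_branching n (D : digraph n) (v : 'I_n) : bool :=
  [exists b, branching D b && adj D b v].

Section SolitaryEdgesBound.
Variables (n : nat) (D : digraph n).
Hypotheses (Dac : acyclic D) (Dsol : solitary_edges D).

(* The points missed by the injection: branching tails, and non-initial heads
   not entered from a branching vertex. *)
Local Notation W := [set u | branching D u].
Local Notation M := [set v | ~~ initial D v & ~~ fed_by_branching D v].

Lemma branching_not_terminal u : branching D u -> ~~ terminal D u.
Proof. by case/existsP => v1 /existsP [v2 /and3P [uv1 _ _]]; apply: edge_not_terminal uv1. Qed.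

Lemma branching_edge_sole b v u : branching D b -> (b, v) \in D -> (u, v) \in D -> u = b.
Proof.
case/existsP => v1 /existsP [v2 /and3P [bv1 bv2 v12]] bv uv.
have [v' bv' v'v] : exists2 v', (b, v') \in D & v' != v.
  by case: (eqVneq v1 v) => [v1v | ]; [exists v2; rewrite // -v1v eq_sym | exists v1].
by case: (Dsol bv) => [/(_ _ bv') /eqP | /(_ _ uv)]; first by rewrite (negbTE v'v).
Qed.

Lemma card_nonbranching_edges :
  #|D :\: [set e | branching D e.1]| + #|W| <= n - n_terminal D.
Proof.
have fst_inj : {in D :\: [set e | branching D e.1] &, injective fst}.
  move=> [u v] [u' v']; rewrite !inE /= => /andP [nbu uv] /andP [_ uv'] uu'.
  rewrite -uu' in uv' *.
  congr pair; apply/eqP; apply: contraNT nbu => vv'.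
  by apply/existsP; exists v; apply/existsP; exists v'; rewrite /adj uv uv'.
rewrite -(card_in_imset fst_inj) -card_setCP.
rewrite -(card_setID_sub (P := fun u => ~~ terminal D u) branching_not_terminal).
rewrite leq_add2r; apply/subset_leq_card/subsetP => _ /imsetP [[u v] + ->].
by rewrite !inE /= => /andP [nbu uv]; rewrite nbu (edge_not_terminal uv).
Qed.

Lemma card_branching_edges :
  #|D :&: [set e | branching D e.1]| + #|M| <= n - n_initial D.
Proof.
have snd_inj : {in D :&: [set e | branching D e.1] &, injective snd}.
  move=> [b v] [b' v']; rewrite !inE /= => /andP [bv bb] /andP [b'v _] vv'.
  by rewrite -vv' in b'v *; rewrite (branching_edge_sole bb bv b'v).
have fed_not_initial v : fed_by_branching D v -> ~~ initial D v.
  by case/existsP => b /andP [_ bv]; apply: edge_not_initial bv.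
rewrite -(card_in_imset snd_inj) -card_setCP addnC.
rewrite -(card_setID_sub (P := fun v => ~~ initial D v) fed_not_initial) leq_add2l.
apply/subset_leq_card/subsetP => _ /imsetP [[b v] + ->].
by rewrite !inE /= => /andP [bv bb]; apply/existsP; exists b; rewrite bb.
Qed.

Lemma card_missed (m : 'I_n) : ~~ initial D m -> ~~ terminal D m -> 2 <= #|W| + #|M|.
Proof.
move=> mI /forallPn [v]; rewrite negbK => mv.
have [W2 | /ltnSE /card_le1_eqP W1] := leqP 2 #|W|; first exact: leq_trans W2 (leq_addr _ _).
have mM : (forall b, branching D b -> b = m) -> m \in M.
  move=> Wm; rewrite !inE mI; apply/existsPn => b; apply/negP => /andP [/Wm bm].
  by rewrite bm; apply/negP/acyclic_noloop.
have [bm | nbm] := boolP (branching D m).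
  apply: (@leq_add 1 1); apply/card_gt0P; exists m; first by rewrite inE.
  by apply: mM => b bb; apply: W1; rewrite inE.
have vM : v \in M.
  rewrite !inE (edge_not_initial mv); apply/existsPn => b; apply/negP => /andP [bb bv].
  by move: nbm; rewrite (branching_edge_sole bb bv mv) bb.
have [W0 | [w wW]] := set_0Vmem W.
  apply: leq_trans (leq_addl _ _); apply/card_gt1P; exists m, v; split => //.
    by apply: mM => b bb; have := in_set0 b; rewrite -W0 inE bb.
  by apply: contraTneq mv => ->; apply: acyclic_noloop.
by apply: (@leq_add 1 1); apply/card_gt0P; [exists w | exists v].
Qed.

Lemma solitary_edges_card_le m : ~~ initial D m -> ~~ terminal D m ->
  #|D| + 2 <= (n - n_terminal D) + (n - n_initial D).
Proof.
move=> mI mT; rewrite -(cardsID [set e | branching D e.1] D) [leqRHS]addnC.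
apply: leq_trans (leq_add card_branching_edges card_nonbranching_edges).
by rewrite addnACA leq_add2l addnC; apply: card_missed mI mT.
Qed.

End SolitaryEdgesBound.

Lemma minimal_tdg_card_le n x y (D : digraph n) : x + y < n -> minimal_tdg x y D ->
  #|D| <= 2 * n - x - y - 2.
Proof.
move=> xy_lt_n Dmin; have [[Dac [Dx Dy]] _] := Dmin.
have /exists_middle [m /andP [mI mT]] : n_initial D + n_terminal D < n by rewrite Dx Dy.
by have := solitary_edges_card_le Dac (minimal_tdg_solitary Dmin) mI mT; rewrite Dx Dy; lia.
Qed.

Section DoubleFan.
Variables x y n : nat.
Hypotheses (x_gt0 : 0 < x) (y_gt0 : 0 < y) (xy_lt_n : x + y < n).

Let source_lt : 0 < n. Proof. lia. Qed.
Let sink_lt : n - y < n. Proof. lia. Qed.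
Let hub_lt : x < n. Proof. lia. Qed.

Let source : 'I_n := Ordinal source_lt.
Let sink : 'I_n := Ordinal sink_lt.
Let hub : 'I_n := Ordinal hub_lt.

(* Vertices below x are initial and those from n - y on are terminal; the hub x
   links the two fans. *)
Let fan : digraph n :=
  setX [set source] ([set v : 'I_n | x <= v] :\ sink)
  :|: setX ([set u : 'I_n | u < n - y] :\ source) [set sink].

Lemma mem_fan u v : ((u, v) \in fan) =
  ((u == 0 :> nat) && (x <= v) && (v != n - y :> nat))
  || ((v == n - y :> nat) && (0 < u < n - y)).
Proof. rewrite !inE -!val_eqE /=; lia. Qed.

Lemma fan_acyclic : acyclic fan.
Proof. by apply: acyclic_increasing => u v; rewrite mem_fan; lia. Qed.

Lemma initial_fan v : initial fan v = (v < x).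
Proof.
apply/forallP/idP => [v_init | lt_vx a]; last by rewrite /adj mem_fan; lia.
have [v_sink | v_sink] := eqVneq (v : nat) (n - y).
  by have := v_init hub; rewrite /adj mem_fan /=; lia.
by have := v_init source; rewrite /adj mem_fan /=; lia.
Qed.

Lemma terminal_fan u : terminal fan u = (n - y <= u).
Proof.
apply/forallP/idP => [u_term | le_yu a]; last by rewrite /adj mem_fan; lia.
have [u_source | u_source] := eqVneq (u : nat) 0.
  by have := u_term hub; rewrite /adj mem_fan /=; lia.
by have := u_term sink; rewrite /adj mem_fan /=; lia.
Qed.

Lemma n_initial_fan : n_initial fan = x.
Proof.
transitivity #|[set v : 'I_n | v < x]|; last exact: card_ord_lt (ltnW hub_lt).
by apply: eq_card => v; rewrite !inE initial_fan.
Qed.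

Lemma n_terminal_fan : n_terminal fan = y.
Proof.
transitivity #|[set v : 'I_n | n - y <= v]|.
  by apply: eq_card => v; rewrite !inE terminal_fan.
rewrite card_ord_geq ?leq_subr // subKn //; lia.
Qed.

Lemma card_fan : #|fan| = 2 * n - x - y - 2.
Proof.
have sink_in : sink \in [set v : 'I_n | x <= v] by rewrite inE /=; lia.
have source_in : source \in [set u : 'I_n | u < n - y] by rewrite inE /=; lia.
have := cardsD1 sink [set v : 'I_n | x <= v]; have := cardsD1 source [set u : 'I_n | u < n - y].
rewrite sink_in source_in (card_ord_geq (ltnW hub_lt)) (card_ord_lt (leq_subr y n)).
rewrite cardsU (_ : _ :&: _ = set0) ?cards0 ?cardsX ?cards1; first lia.
by apply/setP => -[u v]; rewrite !inE -!val_eqE /=; lia.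
Qed.

Lemma fan_minimal : minimal_tdg x y fan.
Proof.
split; first by split; [exact: fan_acyclic | split; [exact: n_initial_fan | exact: n_terminal_fan]].
move=> [u v] uv [_ [D'x D'y]]; move: (uv); rewrite mem_fan => /orP [from_source | to_sink].
  suff /(n_initial_ltS (subD1set fan (u, v)))/(_ (edge_not_initial uv)) :
      initial (fan :\ (u, v)) v by rewrite D'x n_initial_fan ltnn.
  by apply/forallP => a; rewrite /adj in_setD1 mem_fan xpair_eqE -!val_eqE /=; lia.
suff /(n_terminal_ltS (subD1set fan (u, v)))/(_ (edge_not_terminal uv)) :
    terminal (fan :\ (u, v)) u by rewrite D'y n_terminal_fan ltnn.
by apply/forallP => a; rewrite /adj in_setD1 mem_fan xpair_eqE -!val_eqE /=; lia.
Qed.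

Lemma fan_connected : weakly_connected fan.
Proof.
pose r a b := adj fan a b || adj fan b a.
have source_sink : connect r source sink.
  by apply: (connect_trans (y := hub)); apply: connect1; rewrite /r /adj !mem_fan /=; lia.
have from_source w : connect r source w.
  have [-> // | ws] := eqVneq w sink.
  have [-> // | w0] := eqVneq w source.
  move: ws w0; rewrite -!val_eqE /= => ws w0.
  case: (ltnP w (n - y)) => [lt_w | le_w].
    by apply: connect_trans source_sink (connect1 _); rewrite /r /adj !mem_fan /=; lia.
  by apply: connect1; rewrite /r /adj !mem_fan /=; lia.
move=> u v; apply: connect_trans (from_source v).
by rewrite sym_connect_sym ?from_source // => a b; rewrite /r orbC.
Qed.

Lemma fan_extremal :
  exists D : digraph n, conn_minimal_tdg x y D /\ n_edges D = 2 * n - x - y - 2.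
Proof.
by exists fan; split; [split; [exact: fan_minimal | exact: fan_connected] | exact: card_fan].
Qed.

End DoubleFan.

Theorem mainTheorem2 (x y n : nat) (hx : 1 <= x) (hy : 1 <= y) :
  (n = x + y ->
     (exists D : digraph n, conn_minimal_tdg x y D) ->
     minn x y = 1 /\ is_max_edges n x y (maxn x y)) /\
  (x + y < n -> is_max_edges n x y (2 * n - x - y - 2)).
Proof.
split=> [nxy [D0 D0conn] | xy_lt_n].
  have [card_D0 side] := conn_minimal_tdg_star hx hy nxy D0conn.
  have max_side : maxn x y = n - 1 by case: side; lia.
  split; first by case: side; lia.
  split; first by exists D0; rewrite /n_edges card_D0 max_side.
  by move=> D /(conn_minimal_tdg_star hx hy nxy) [card_D _]; rewrite /n_edges card_D max_side.
split; first exact: fan_extremal.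
by move=> D [Dmin _]; apply: minimal_tdg_card_le.
Qed.
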